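(* Let $n\ge1$, $m_1,\dots,m_n\ge1$ integers, $\mu\in(0,1)$, and let $X_{i,j}$, $i=1,\dots,n$, $j=1,\dots,m_i$, be i.i.d. $\mathrm{Bernoulli}(\mu)$. Define $\widehat\mu=\frac1n\sum_{i=1}^n\frac1{m_i}\sum_{j=1}^{m_i}X_{i,j}$ and, for $\lambda>0$, $M_\mu(\lambda)=\mathbb{E}\big[e^{n\lambda\,\mathrm{kl}(\widehat\mu\,|\,\mu)}\big]$. Let $m_{\min}=\min_i m_i$. If $\lambda>m_{\min}$, then $\sup_{0<\mu<1}M_\mu(\lambda)=+\infty$. In particular, there is no finite upper bound on $M_\mu(\lambda)$ that depends only on $n$ and $m_1,\dots,m_n$ and not on $\mu$.
   Context: $\mathrm{kl}(q|p)=q\log\frac qp+(1-q)\log\frac{1-q}{1-p}$ for $q\in[0,1]$, $p\in(0,1)$, with the convention $0\log 0=0$ (the KL divergence between Bernoulli distributions of means $q$ and $p$). *)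

From HB Require Import structures.
From mathcomp Require Import all_boot all_order all_algebra.
From mathcomp Require Import all_classical all_reals all_analysis.
Set Implicit Arguments. Unset Strict Implicit. Unset Printing Implicit Defensive.
Import Order.TTheory GRing.Theory Num.Theory.
Local Open Scope ring_scope.

Section Defs.
Variable R : realType.

Definition kl (q p : R) : R :=
  (if q == 0 then 0 else q * ln (q / p)) +
  (if q == 1 then 0 else (1 - q) * ln ((1 - q) / (1 - p))).

Definition Idx (n : nat) (m : 'I_n -> nat) : finType := {i : 'I_n & 'I_(m i)}.

Definition Sample (n : nat) (m : 'I_n -> nat) : finType := {ffun Idx m -> bool}.

Definition prob (n : nat) (m : 'I_n -> nat) (mu : R) (x : Sample m) : R :=
  \prod_(k : Idx m) (if x k then mu else 1 - mu).

Definition muhat (n : nat) (m : 'I_n -> nat) (x : Sample m) : R :=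
  (n%:R)^-1 * \sum_(i < n) ((m i)%:R^-1 *
     \sum_(j < m i) ((x (Tagged (fun i => 'I_(m i)) j) : nat)%:R)).

Definition Mgf (n : nat) (m : 'I_n -> nat) (mu lam : R) : R :=
  \sum_(x : Sample m) prob mu x * expR (n%:R * lam * kl (muhat x) mu).

End Defs.

(* m_min = min_i m_i (for n >= 1; the seed \max_i m_i is neutral then) *)
Definition mmax (n : nat) (m : 'I_n -> nat) : nat := (\max_(i < n) m i)%N.
Definition mmin (n : nat) (m : 'I_n -> nat) : nat :=
  \big[minn/mmax m]_(i < n) m i.

(* Put all the mass of a sample on one block: X_{i0,j} = 1 for all j and X_{i,j} = 0 for
   i <> i0, where m_{i0} = m_min.  This outcome has probability of order mu^(m_min), while
   hat mu = 1/n, so that n lambda kl(1/n | mu) = lambda ln(1/mu) + O(1).  Its contribution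
   to M_mu(lambda) is therefore of order mu^(m_min - lambda), which blows up as mu -> 0 as
   soon as lambda > m_min. *)
From HB Require Import structures.
From mathcomp Require Import all_boot all_order all_algebra.
From mathcomp Require Import all_classical all_reals all_analysis.
From mathcomp Require Import ring lra.
Import Order.TTheory GRing.Theory Num.Theory.
Local Open Scope ring_scope.

Lemma mmin_attained {n : nat} (m : 'I_n -> nat) :
  (0 < n)%N -> exists i0, (m i0 <= mmin m)%N.
Proof.
move=> n_gt0; have [i _ i_min] := @arg_minnP _ (Ordinal n_gt0) xpredT m isT.
exists i; apply: (big_ind (fun x => m i <= x)%N) => [|a b ha hb|j _].
- exact: leq_trans (i_min _ isT) (leq_bigmax _).
- by rewrite leq_min ha hb.
- exact: i_min.
Qed.

Lemma kl_ge_cross_entropy {R : realType} {q mu : R} : 0 < q <= 1 -> 0 < mu < 1 ->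
  q * (ln q - ln mu) + (if q == 1 then 0 else (1 - q) * ln (1 - q)) <= kl q mu.
Proof.
move=> /andP[q_gt0 q_le1] /andP[mu_gt0 mu_lt1].
rewrite /kl (gt_eqF q_gt0) lnM ?posrE ?invr_gt0 // lnV ?posrE // lerD2l.
case: ifPn => // q_neq1.
have q_lt1 : q < 1 by rewrite lt_neqAle q_neq1 q_le1.
rewrite ler_wpM2l ?subr_ge0 // ler_ln ?posrE ?divr_gt0 ?subr_gt0 //.
by rewrite ler_pdivlMr ?subr_gt0 //; nra.
Qed.

Lemma Mgf_ge_term {R : realType} {n : nat} (m : 'I_n -> nat) (mu lam : R)
    (x : Sample m) : 0 <= mu <= 1 ->
  prob mu x * expR (n%:R * lam * kl (muhat R x) mu) <= Mgf m mu lam.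
Proof.
move=> /andP[mu_ge0 mu_le1].
rewrite /Mgf (bigD1 x) //= lerDl; apply: sumr_ge0 => y _.
apply: mulr_ge0; last exact: ltW (expR_gt0 _).
by apply: prodr_ge0 => k _; case: (y k); rewrite ?subr_ge0.
Qed.

Section BlockSample.
Context {R : realType} {n : nat} {m : 'I_n -> nat} (i0 : 'I_n).
Hypothesis m_gt0 : forall i, (0 < m i)%N.

Definition block_sample : Sample m := [ffun k : Idx m => tag k == i0].

Lemma prob_block_sample (mu : R) :
  prob mu block_sample = mu ^+ m i0 * \prod_(i < n | i != i0) (1 - mu) ^+ m i.
Proof.
have -> : prob mu block_sample =
    \prod_(i < n) \prod_(j < m i) (if i == i0 then mu else 1 - mu).
  rewrite /prob (@sig_big_dep R 1 *%R _ (fun i => 'I_(m i)) xpredT (fun _ => xpredT)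
    (fun i _ => if i == i0 then mu else 1 - mu)) /=.
  by apply: eq_bigr => -[i j] _; rewrite ffunE.
rewrite (bigD1 i0) //= eqxx prodr_const card_ord; congr (_ * _).
by apply: eq_bigr => i /negbTE ->; rewrite prodr_const card_ord.
Qed.

Lemma muhat_block_sample : muhat R block_sample = n%:R^-1.
Proof.
rewrite /muhat (eq_bigr (fun i => ((i == i0 : nat)%:R : R))) => [|i _].
  by rewrite (bigD1 i0) //= eqxx big1 ?addr0 ?mulr1 // => i /negbTE ->.
rewrite (eq_bigr (fun _ => ((i == i0 : nat)%:R : R))) => [|j _]; last by rewrite ffunE.
by rewrite sumr_const card_ord -[X in _ * X]mulr_natr mulrC mulfK // pnatr_eq0 -lt0n.
Qed.

Hypothesis n_gt0 : (0 < n)%N.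

(* The constant [D] collects the factors that stay bounded as [mu -> 0]: the weight
   [(1 - mu)^(m i) >= 2^-(m i)] of the empty blocks and the [mu]-free part of [kl]. *)
Lemma Mgf_block_lower_bound (lam : R) : 0 <= lam -> exists D : R,
  forall mu : R, 0 < mu <= 2^-1 -> expR (D - (lam - (m i0)%:R) * ln mu) <= Mgf m mu lam.
Proof.
move=> lam_ge0; set q : R := n%:R^-1; set k := m i0.
set h : R := if q == 1 then 0 else (1 - q) * ln (1 - q).
set P0 : R := \prod_(i < n | i != i0) (2^-1) ^+ m i.
have P0_gt0 : 0 < P0 by apply: prodr_gt0 => i _; rewrite exprn_gt0 ?invr_gt0.
have q_gt0 : 0 < q by rewrite invr_gt0 ltr0n.
have q_le1 : q <= 1 by rewrite invf_le1 ?ltr0n // ler1n.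
have nq : n%:R * q = 1 by rewrite mulfV // pnatr_eq0 -lt0n.
exists (ln P0 + lam * ln q + n%:R * lam * h) => mu /andP[mu_gt0 mu_le_half].
have mu_lt1 : mu < 1 by lra.
have kl_bound : lam * ln q - lam * ln mu + n%:R * lam * h <= n%:R * lam * kl q mu.
  have nlam_ge0 : 0 <= n%:R * lam by rewrite mulr_ge0.
  have q_range : 0 < q <= 1 by rewrite q_gt0.
  have mu_range : 0 < mu < 1 by rewrite mu_gt0.
  apply: le_trans (ler_wpM2l nlam_ge0 (kl_ge_cross_entropy q_range mu_range)).
  rewrite -/h.
  have -> : n%:R * lam * (q * (ln q - ln mu) + h) =
    lam * (ln q - ln mu) * (n%:R * q) + n%:R * lam * h by ring.
  by rewrite nq mulr1 mulrBr.
have empty_blocks : P0 <= \prod_(i < n | i != i0) (1 - mu) ^+ m i.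
  apply: ler_prod => i _; rewrite exprn_ge0 ?invr_ge0 //=.
  by apply: lerXn2r; rewrite ?nnegrE //; lra.
apply: le_trans (Mgf_ge_term m mu lam block_sample _); last by rewrite !ltW.
rewrite prob_block_sample muhat_block_sample.
have -> : ln P0 + lam * ln q + n%:R * lam * h - (lam - k%:R) * ln mu =
    ln mu * k%:R + ln P0 + (lam * ln q - lam * ln mu + n%:R * lam * h) by ring.
rewrite expRD [expR (_ * _ + _)]expRD expRM_natr !lnK ?posrE //.
apply: ler_pM.
- by rewrite mulr_ge0 ?exprn_ge0 ?ltW.
- exact: expR_ge0.
- by rewrite ler_wpM2l ?exprn_ge0 ?(ltW mu_gt0).
- by rewrite ler_expR.
Qed.

End BlockSample.

Lemma expR_sub_mul_ln_unbounded {R : realType} {c : R} (D B : R) : 0 < c ->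
  exists mu : R, 0 < mu <= 2^-1 /\ B < expR (D - c * ln mu).
Proof.
move=> c_gt0; set L := ln (1 + `|B|); set t : R := 1 + (`|L| + `|D|) / c.
have t_ge1 : 1 <= t by rewrite lerDl divr_ge0 ?addr_ge0 // ltW.
have ct : c * t = c + (`|L| + `|D|).
  by rewrite mulrDr mulr1 mulrCA mulfV ?mulr1 // gt_eqF.
have B_lt : B < expR L.
  by rewrite lnK ?posrE ?ltr_pwDl //; have := ler_norm B; lra.
exists (expR (- t)); rewrite expR_gt0 expRK mulrN opprK; split.
  rewrite expRN lef_pV2 ?posrE ?expR_gt0 //.
  by apply: le_trans (expR_ge1Dx 1) _; rewrite ler_expR.
apply: lt_le_trans B_lt _; rewrite ler_expR ct.
by have := ler_norm L; have := ler_norm (- D); rewrite normrN; lra.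
Qed.

Theorem lemma1 (R : realType) (n : nat) (m : 'I_n -> nat) (lam : R) :
  (0 < n)%N -> (forall i, (0 < m i)%N) -> 0 < lam ->
  (mmin m)%:R < lam ->
  forall B : R, exists mu : R, 0 < mu < 1 /\ B < Mgf m mu lam.
Proof.
move=> n_gt0 m_gt0 lam_gt0 mmin_lt_lam B.
have [i0 i0_min] := mmin_attained m n_gt0.
have [D Mgf_ge] := Mgf_block_lower_bound i0 m_gt0 n_gt0 lam (ltW lam_gt0).
have c_gt0 : 0 < lam - (m i0)%:R.
  by rewrite subr_gt0 (le_lt_trans _ mmin_lt_lam) ?ler_nat.
have [mu [/andP[mu_gt0 mu_le_half] B_lt]] := expR_sub_mul_ln_unbounded D B c_gt0.
exists mu; split; first by apply/andP; split => //; lra.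
by apply: lt_le_trans B_lt (Mgf_ge _ _); rewrite mu_gt0.
Qed.
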